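(* Let $I$ be a set of integers, let $n$ be a positive integer, and let $(a(i_0,\dots,i_n))_{i_0,\dots,i_n\in I}$ be a family of integers. Then there exists a family of integers $(x(i_0,\dots,i_{n-1}))_{i_0,\dots,i_{n-1}\in I}$ such that $$\sum_{j=0}^{n}(-1)^j\,x(i_0,\dots,\widehat{i_j},\dots,i_n)\equiv a(i_0,\dots,i_n)\pmod{(i_0,\dots,i_n)}\quad\text{for all } i_0,\dots,i_n\in I$$ if and only if $$\sum_{j=0}^{n+1}(-1)^j\,a(i_0,\dots,\widehat{i_j},\dots,i_{n+1})\equiv 0\pmod{(i_0,\dots,i_{n+1})}\quad\text{for all } i_0,\dots,i_{n+1}\in I.$$
   Context: For integers $i_0,\dots,i_m$, the notation $(i_0,\dots,i_m)$ denotes the ideal of $\mathbb{Z}$ generated by $i_0,\dots,i_m$, i.e. $\gcd(i_0,\dots,i_m)\mathbb{Z}$; a congruence modulo an ideal means the difference lies in that ideal. A hat $\widehat{i_j}$ means that the entry $i_j$ is omitted. *)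

From mathcomp Require Import all_boot all_order all_algebra.
Set Implicit Arguments. Unset Strict Implicit. Unset Printing Implicit Defensive.
Import Order.TTheory GRing.Theory Num.Theory.

Definition omit (n : nat) (t : n.+1.-tuple int) (j : 'I_n.+1) : n.-tuple int :=
  [tuple tnth t (lift j k) | k < n].

(* gcdt t : the nonnegative generator gcd(i_0, ..., i_m) of the ideal
   (i_0, ..., i_m) of Z (gcd of the empty family / all zeros is 0). *)
Definition gcdt (m : nat) (t : m.-tuple int) : int := foldr gcdz 0%R t.

Definition allin (I : pred int) (m : nat) (t : m.-tuple int) : Prop :=
  forall k : 'I_m, I (tnth t k).

(* Write da for the alternating coboundary of a.  Necessity is dd = 0 together with
   (i_0, ..., i_{n+1}) dividing every (i_0, ..., \hat{i_j}, ..., i_{n+1}).  For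
   sufficiency, by the Chinese remainder theorem it suffices, for each prime l, to
   solve dx = a modulo l^e(t), where l^e(t) is the l-part of gcd t; then x(s) only
   matters modulo l^e(s).  Pick p_0, p_1, ... in I with l^e | p_m whenever l^e
   divides some element of I and e <= m.  Coning off at p_m,
   z_m(s) = a(p_m, s) + dW_m(s) with W_m(r) = sum_(i < m) a(p_i, p_(i+1), r),
   satisfies dz_m = a modulo gcd(p_m, t), and z_(m+1) - z_m = da(p_m, p_(m+1), -)
   is divisible by l^e on tuples divisible by l^e when e <= m; so x(s) := z_e(s)(s)
   works.  When 0 is in I one cones off at 0 directly. *)

From mathcomp Require Import all_boot all_order all_algebra zify ring.
From Stdlib Require Import Classical ClassicalEpsilon.
Import Order.TTheory GRing.Theory Num.Theory.
Local Open Scope ring_scope.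
Set Implicit Arguments. Unset Strict Implicit.

Lemma tnth_omit n (t : n.+1.-tuple int) j k : tnth (omit t j) k = tnth t (lift j k).
Proof. by rewrite tnth_map tnth_ord_tuple. Qed.

Lemma omit_cons0 n p (t : n.-tuple int) : omit [tuple of p :: t] ord0 = t.
Proof. by apply: eq_from_tnth => k; rewrite tnth_omit tnthS. Qed.

Lemma omit_cons_lift n p (t : n.+1.-tuple int) j :
  omit [tuple of p :: t] (lift ord0 j) = [tuple of p :: omit t j].
Proof.
apply: eq_from_tnth => k; rewrite tnth_omit.
case: (unliftP ord0 k) => [k' -> | ->].
  rewrite tnthS tnth_omit.
  have -> : lift (lift ord0 j) (lift ord0 k') = lift ord0 (lift j k').
    by apply: val_inj; rewrite /= /bump /=; lia.
  by rewrite tnthS.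
have -> : lift (lift ord0 j) ord0 = ord0 by exact: val_inj.
by rewrite !tnth0.
Qed.

Lemma allin_omit (I : pred int) n (t : n.+1.-tuple int) j : allin I t -> allin I (omit t j).
Proof. by move=> It k; rewrite tnth_omit. Qed.

Lemma allin_cons (I : pred int) n p (t : n.-tuple int) :
  I p -> allin I t -> allin I [tuple of p :: t].
Proof. by move=> Ip It k; case: (unliftP ord0 k) => [k' -> | ->]; rewrite ?tnthS ?tnth0. Qed.

Lemma dvdz_gcdt d m (t : m.-tuple int) : (d %| gcdt t)%Z = all (dvdz d) t.
Proof. by rewrite /gcdt; elim: (val t) => [|i s IHs] /=; rewrite ?dvdz0 // dvdz_gcd IHs. Qed.

Lemma gcdt_dvd m (t : m.-tuple int) k : (gcdt t %| tnth t k)%Z.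
Proof.
have /allP : all (dvdz (gcdt t)) t by rewrite -dvdz_gcdt dvdzz.
by apply; apply: mem_tnth.
Qed.

Lemma gcdt_dvd_omit n (t : n.+1.-tuple int) j : (gcdt t %| gcdt (omit t j))%Z.
Proof.
by rewrite dvdz_gcdt; apply/allP => _ /tnthP [k ->]; rewrite tnth_omit; apply: gcdt_dvd.
Qed.

Lemma gcdt_cons n p (t : n.-tuple int) : gcdt [tuple of p :: t] = gcdz p (gcdt t).
Proof. by []. Qed.

Lemma gcdt_ge0 m (t : m.-tuple int) : 0 <= gcdt t.
Proof. by case: t => [[|i s] ?]. Qed.

Lemma gcdt_neq0 (I : pred int) n (t : n.+1.-tuple int) : ~~ I 0 -> allin I t -> gcdt t != 0.
Proof.
move=> I0 It; apply: contraNneq I0 => t0.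
by have := gcdt_dvd t ord0; rewrite t0 dvd0z => /eqP <-; apply: It.
Qed.

Section Coboundary.
Variable R : pzRingType.

Definition cobound n (f : n.-tuple int -> R) (t : n.+1.-tuple int) : R :=
  \sum_(j < n.+1) (-1) ^+ j * f (omit t j).

Lemma eq_cobound n (f g : n.-tuple int -> R) : f =1 g -> cobound f =1 cobound g.
Proof. by move=> fg t; apply: eq_bigr => j _; rewrite fg. Qed.

Lemma coboundD n (f g : n.-tuple int -> R) t : cobound (f \+ g) t = cobound f t + cobound g t.
Proof. by rewrite -big_split; apply: eq_bigr => j _; rewrite mulrDr. Qed.

Lemma coboundB n (f g : n.-tuple int -> R) t : cobound (f \- g) t = cobound f t - cobound g t.
Proof. by rewrite -sumrB; apply: eq_bigr => j _; rewrite mulrBr. Qed.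

Lemma cobound_cons n (f : n.+1.-tuple int -> R) (p : int) (t : n.+1.-tuple int) :
  cobound f [tuple of p :: t] = f t - cobound (fun s => f [tuple of p :: s]) t.
Proof.
rewrite /cobound big_ord_recl omit_cons0 expr0 mul1r -sumrN.
by congr (_ + _); apply: eq_bigr => j _; rewrite omit_cons_lift exprS mulN1r mulNr.
Qed.

(* Coning off at the first entry p shows dd f (p :: t) = dd (f (p :: -)) t. *)
Lemma cobound_cobound n (f : n.-tuple int -> R) : cobound (cobound f) =1 (fun _ => 0).
Proof.
elim: n f => [|n IHn] f t.
  have cst : cobound f =1 (fun _ => f [tuple]).
    by move=> s; rewrite /cobound big_ord1 mul1r tuple0.
  by rewrite (eq_cobound cst) /cobound big_ord_recl big_ord1 /= expr1 mul1r mulN1r subrr.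
case/tupleP: t => p t.
have cone_f : (fun s : n.+1.-tuple int => cobound f [tuple of p :: s])
    =1 f \- cobound (fun s : n.-tuple int => f [tuple of p :: s]).
  by move=> s; rewrite cobound_cons.
by rewrite cobound_cons (eq_cobound cone_f) coboundB IHn subr0 subrr.
Qed.

End Coboundary.

Definition cocycle_mod_gcd (I : pred int) n (a : n.+1.-tuple int -> int) :=
  forall T : n.+2.-tuple int, allin I T -> (gcdt T %| cobound a T)%Z.

Lemma cocycle_of_coboundary (I : pred int) n
    (a : n.+1.-tuple int -> int) (x : n.-tuple int -> int) :
  (forall t : n.+1.-tuple int, allin I t -> (gcdt t %| cobound x t - a t)%Z) ->
  cocycle_mod_gcd I a.
Proof.
move=> xa T IT.
have -> : cobound a T = - cobound (cobound x \- a) T.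
  by rewrite coboundB cobound_cobound sub0r opprK.
rewrite rpredN; apply: rpred_sum => j _; apply: dvdz_mull.
exact/(dvdz_trans (gcdt_dvd_omit T j))/xa/allin_omit.
Qed.

Lemma cone_cocycle_dvd (I : pred int) n
    (a : n.+1.-tuple int -> int) p (t : n.+1.-tuple int) :
  cocycle_mod_gcd I a -> I p -> allin I t ->
  (gcdz p (gcdt t) %| cobound (fun s : n.-tuple int => a [tuple of p :: s]) t - a t)%Z.
Proof.
by move=> ca Ip It; rewrite -opprB -cobound_cons rpredN -gcdt_cons; apply/ca/allin_cons.
Qed.

Section Cone.
Variables (n : nat) (a : n.+2.-tuple int -> int) (P : nat -> int).

Definition cone_path m (r : n.-tuple int) : int :=
  \sum_(i < m) a [tuple of P i :: P i.+1 :: r].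

Definition cone_cochain m (s : n.+1.-tuple int) : int :=
  a [tuple of P m :: s] + cobound (cone_path m) s.

Lemma cobound_cone_cochain m t :
  cobound (cone_cochain m) t = cobound (fun s : n.+1.-tuple int => a [tuple of P m :: s]) t.
Proof. by rewrite coboundD cobound_cobound addr0. Qed.

Lemma cone_cochainS m s :
  cone_cochain m.+1 s - cone_cochain m s = cobound a [tuple of P m :: P m.+1 :: s].
Proof.
have pathS : cone_path m.+1 =1 cone_path m \+ (fun r => a [tuple of P m :: P m.+1 :: r]).
  by move=> r; rewrite /cone_path big_ord_recr.
rewrite /cone_cochain (eq_cobound pathS) coboundD !cobound_cons.
ring.
Qed.

End Cone.

Definition adapted (I : pred int) (l : nat) (P : nat -> int) :=
  forall m, I (P m) /\
    forall i e, I i -> (e <= m)%N -> ((l ^ e)%:Z %| i)%Z -> ((l ^ e)%:Z %| P m)%Z.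

Lemma exists_adapted (I : pred int) l i0 : I i0 -> exists P, adapted I l P.
Proof.
move=> Ii0; suff /ClassicalEpsilon.choice[P adP] : forall m, exists p, I p /\
    forall i e, I i -> (e <= m)%N -> ((l ^ e)%:Z %| i)%Z -> ((l ^ e)%:Z %| p)%Z.
  by exists P.
elim=> [|m [p [Ip Pp]]].
  by exists i0; split=> // i e _; rewrite leqn0 => /eqP-> _; rewrite expn0 dvd1z.
have [[q [Iq dvdq]] | noq] := classic (exists q, I q /\ ((l ^ m.+1)%:Z %| q)%Z).
  exists q; split=> // i e _ le_em _; apply: dvdz_trans dvdq.
  by rewrite dvdzE /= dvdn_exp2l.
exists p; split=> // i e Ii; rewrite leq_eqVlt => /orP [/eqP-> dvdi | ]; last exact: Pp.
by case: noq; exists i.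
Qed.

Lemma logn_gcdt_omit (I : pred int) l n (t : n.+2.-tuple int) j :
  ~~ I 0 -> allin I t -> (logn l `|gcdt t| <= logn l `|gcdt (omit t j)|)%N.
Proof.
move=> I0 It; apply: dvdn_leq_log; first by rewrite absz_gt0 (gcdt_neq0 I0 (allin_omit j It)).
by rewrite -dvdzE gcdt_dvd_omit.
Qed.

Section LocalSolution.
Variables (I : pred int) (n : nat) (a : n.+2.-tuple int -> int) (l : nat) (P : nat -> int).
Hypotheses (ca : cocycle_mod_gcd I a) (adP : adapted I l P).

Lemma cone_cochain_congr (s : n.+1.-tuple int) e d :
  allin I s -> ((l ^ e)%:Z %| gcdt s)%Z ->
  ((l ^ e)%:Z %| cone_cochain a P (e + d) s - cone_cochain a P e s)%Z.
Proof.
move=> Is dvd_s; have dvdP m : (e <= m)%N -> ((l ^ e)%:Z %| P m)%Z.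
  move=> le_em; case: (adP m) => _ /(_ _ e (Is ord0) le_em); apply.
  exact: dvdz_trans dvd_s (gcdt_dvd s ord0).
elim: d => [|d IHd]; first by rewrite addn0 subrr dvdz0.
have -> : cone_cochain a P (e + d.+1) s - cone_cochain a P e s =
    (cone_cochain a P (e + d).+1 s - cone_cochain a P (e + d) s)
  + (cone_cochain a P (e + d) s - cone_cochain a P e s) by rewrite addnS; ring.
rewrite rpredD // cone_cochainS; apply: dvdz_trans (ca _); last first.
  apply: allin_cons; first by case: (adP (e + d)).
  by apply: allin_cons => //; case: (adP (e + d).+1).
by rewrite !gcdt_cons !dvdz_gcd dvd_s !dvdP ?leq_addr // ltnW // ltnS leq_addr.
Qed.

Hypothesis I0 : ~~ I 0.

Lemma cone_cochain_solves (t : n.+2.-tuple int) : allin I t ->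
  ((l ^ logn l `|gcdt t|)%:Z %|
     cobound (fun s => cone_cochain a P (logn l `|gcdt s|) s) t - a t)%Z.
Proof.
move=> It; set e := logn l `|gcdt t|.
have dvd_t : ((l ^ e)%:Z %| gcdt t)%Z by rewrite dvdzE /= pfactor_dvdnn.
set x := fun s => _.
have -> : cobound x t - a t =
    cobound (x \- cone_cochain a P e) t + (cobound (cone_cochain a P e) t - a t).
  by rewrite coboundB; ring.
apply: rpredD.
  apply: rpred_sum => j _; apply: dvdz_mull; rewrite /x /=.
  have /subnKC <- := logn_gcdt_omit l j I0 It.
  apply: cone_cochain_congr; first exact: allin_omit.
  exact: dvdz_trans dvd_t (gcdt_dvd_omit t j).
have [IPe dvdPe] := adP e.
rewrite cobound_cone_cochain; apply: dvdz_trans (cone_cocycle_dvd ca IPe It).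
rewrite dvdz_gcd dvd_t andbT; apply: dvdPe (It ord0) _ _ => //.
exact: dvdz_trans dvd_t (gcdt_dvd t ord0).
Qed.

End LocalSolution.

Lemma dvdz_prime_parts (g : nat) (y : int) : (0 < g)%N ->
  (forall l, prime l -> ((l ^ logn l g)%:Z %| y)%Z) -> (g%:Z %| y)%Z.
Proof.
move=> g_gt0 dvd_y; rewrite dvdzE; apply/(dvdn_partP _ g_gt0) => l.
by rewrite mem_primes p_part => /and3P [l_pr _ _]; rewrite -(dvdzE (Posz _)) dvd_y.
Qed.

Lemma chinese_prime_parts (g : nat) (f : nat -> int) :
  exists y, forall l, prime l -> ((l ^ logn l g)%:Z %| y - f l)%Z.
Proof.
suff [y dvd_y] : exists y, forall l, l \in primes g -> ((l ^ logn l g)%:Z %| y - f l)%Z.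
  exists y => l l_pr; have [/dvd_y // | l_g] := boolP (l \in primes g).
  by rewrite -logn_gt0 lt0n negbK in l_g; rewrite (eqP l_g) expn0 dvd1z.
have := primes_uniq g; have := all_prime_primes g.
elim: (primes g) => [|l r IHr] /=; first by exists 0.
case/andP=> l_pr r_pr /andP [l_r r_uniq]; have [y dvd_y] := IHr r_pr r_uniq.
pose q i := (i ^ logn i g)%N; pose M := (\prod_(i <- r) q i)%N.
have coMl : coprimez (q l) M.
  rewrite coprimezE /= /M big_seq.
  apply: (big_ind (coprime (q l))) => [|u v|i i_r]; first exact: coprimen1.
    by rewrite coprimeMr => cu cv; apply/andP.
  have l_i : l != i by apply: contraNneq l_r => ->.
  by apply: coprimeXl; apply: coprimeXr; rewrite prime_coprime // dvdn_prime2 // (allP r_pr).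
exists (zchinese (q l) M (f l) y) => i; rewrite in_cons => /predU1P [-> | i_r].
  by rewrite -eqz_mod_dvd; apply/eqP/zchinese_modl.
set z := zchinese _ _ _ _; have -> : z - f i = (z - y) + (y - f i) by ring.
rewrite rpredD ?dvd_y //; apply: (@dvdz_trans M).
  by rewrite dvdzE /= /M (big_rem i) //= dvdn_mulr.
by rewrite -eqz_mod_dvd; apply/eqP/zchinese_modr.
Qed.

Lemma coboundary_of_cocycle (I : pred int) n (a : n.+2.-tuple int -> int) :
  cocycle_mod_gcd I a ->
  exists x : n.+1.-tuple int -> int,
    forall t : n.+2.-tuple int, allin I t -> (gcdt t %| cobound x t - a t)%Z.
Proof.
move=> ca; have [I0 | I0] := boolP (I 0).
  exists (fun s : n.+1.-tuple int => a [tuple of 0 :: s]) => t It.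
  by have := cone_cocycle_dvd ca I0 It; rewrite gcd0z gez0_abs ?gcdt_ge0.
have [[i0 Ii0] | noI] := classic (exists i, I i); last first.
  by exists (fun=> 0) => t It; case: noI; exists (tnth t ord0).
have /ClassicalEpsilon.choice [P adP] : forall l, exists P, adapted I l P.
  by move=> l; apply: exists_adapted Ii0.
pose xl l s := cone_cochain a (P l) (logn l `|gcdt s|) s.
have /ClassicalEpsilon.choice [x dvd_x] : forall s : n.+1.-tuple int, exists y,
    forall l, prime l -> ((l ^ logn l `|gcdt s|)%:Z %| y - xl l s)%Z.
  by move=> s; apply: chinese_prime_parts.
exists x => t It; rewrite -[gcdt t]gez0_abs ?gcdt_ge0 //.
apply: dvdz_prime_parts => [|l l_pr]; first by rewrite absz_gt0 (gcdt_neq0 I0 It).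
have -> : cobound x t - a t = cobound (x \- xl l) t + (cobound (xl l) t - a t).
  by rewrite coboundB; ring.
apply: rpredD; last exact: (cone_cochain_solves ca (adP l) I0 It).
apply: rpred_sum => j _; apply: dvdz_mull; apply: dvdz_trans (dvd_x _ _ l_pr).
by rewrite dvdzE /= dvdn_exp2l // (logn_gcdt_omit _ _ I0 It).
Qed.

Unset Implicit Arguments.

Theorem theorem2 (I : pred int) (n : nat) (a : n.+1.-tuple int -> int) :
  (0 < n)%N ->
  (exists x : n.-tuple int -> int,
     forall t : n.+1.-tuple int, allin I t ->
       (\sum_(j < n.+1) (-1) ^+ j * x (omit t j) == a t %[mod gcdt t])%Z)
  <->
  (forall t : n.+2.-tuple int, allin I t ->
     (\sum_(j < n.+2) (-1) ^+ j * a (omit t j) == 0 %[mod gcdt t])%Z).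
Proof.
move=> n_gt0; split=> [[x xa] t It | ca].
  rewrite eqz_mod_dvd subr0; apply: (cocycle_of_coboundary (x := x)) It => s Is.
  by rewrite -eqz_mod_dvd; apply: xa.
case: n a n_gt0 ca => // n a _ ca.
have [|x xa] := @coboundary_of_cocycle I n a.
  by move=> T IT; have := ca T IT; rewrite eqz_mod_dvd subr0.
by exists x => t It; rewrite eqz_mod_dvd xa.
Qed.
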